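(* Let $A$, $c$ be as in the context, let $u\in\mathcal O_c$ and let $\tau$ be a face of $\Delta_c$. If the group relaxation $G^\tau(Au)$ solves $IP_{A,c}(Au)$, then $G^\tau(Av)$ solves $IP_{A,c}(Av)$ for all $v\in S(u,\tau):=u+\mathbb N\{e_i:i\in\tau\}$.
   Context: $A\in\mathbb Z^{d\times n}$ has rank $d$, columns $a_1,\dots,a_n$, $cone(A)$ pointed, $\{x\in\mathbb R^n_{\ge0}:Ax=0\}=\{0\}$, $\mathbb ZA=\mathbb Z^d$, $\mathbb NA=\{Au:u\in\mathbb N^n\}$. For $c\in\mathbb Z^n$ and $b\in\mathbb NA$, $IP_{A,c}(b)=\min\{c\cdot x: Ax=b,\ x\in\mathbb N^n\}$. The regular triangulation $\Delta_c$ is the collection of $\sigma\subseteq\{1,\dots,n\}$ for which some $y\in\mathbb R^d$ has $y\cdot a_j=c_j$ ($j\in\sigma$), $y\cdot a_j<c_j$ ($j\notin\sigma$). $c$ is generic: $\Delta_c$ is a triangulation and every $IP_{A,c}(b)$ has a unique optimal solution. $\mathcal O_c\subseteq\mathbb N^n$ is the set of optimal solutions of all $IP_{A,c}(b)$, $b\in\mathbb NA$. For a maximal face $\sigma$ of $\Delta_c$ let $\tilde c_{\bar\sigma}=c_{\bar\sigma}-c_\sigma A_\sigma^{-1}A_{\bar\sigma}$, and for a face $\tau\subseteq\sigma$ let $\tilde c_{\bar\tau}$ be its extension by zeros to $\mathbb R^{|\bar\tau|}$. The group relaxation $G^\tau(b)$ is $\min\{\tilde c_{\bar\tau}\cdot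 x_{\bar\tau}: A_\tau x_\tau+A_{\bar\tau}x_{\bar\tau}=b,\ x_{\bar\tau}\ge0,\ (x_\tau,x_{\bar\tau})\in\mathbb Z^n\}$; it solves $IP_{A,c}(b)$ if its optimal solution is non-negative. $e_i$ is the $i$-th unit vector of $\mathbb R^n$. *)

From HB Require Import structures.
From mathcomp Require Import all_boot all_order all_algebra.
From mathcomp Require Import Rstruct.
From Stdlib Require Import Rdefinitions.
Set Implicit Arguments. Unset Strict Implicit. Unset Printing Implicit Defensive.
Import Order.TTheory GRing.Theory Num.Theory.
Local Open Scope ring_scope.

Section Defs.
Variables (d n : nat) (A : 'M[int]_(d, n)) (c : 'I_n -> int).

Definition AR : 'M[R]_(d, n) := map_mx (fun z : int => z%:~R) A.

Definition ydot (y : 'rV[R]_d) (j : 'I_n) : R := \sum_(i < d) y 0 i * (A i j)%:~R.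

Definition cdot (x : 'cV[int]_n) : int := \sum_(j < n) c j * x j 0.

Definition nonneg_int (x : 'cV[int]_n) : Prop := forall j, 0 <= x j 0.

Definition rank_full : Prop := \rank AR = d.
Definition cone_pointed : Prop :=
  forall l m : 'cV[R]_n, (forall j, 0 <= l j 0) -> (forall j, 0 <= m j 0) ->
    AR *m l = - (AR *m m) -> AR *m l = 0.
Definition ker_pos_trivial : Prop :=
  forall x : 'cV[R]_n, (forall j, 0 <= x j 0) -> AR *m x = 0 -> x = 0.
Definition lattice_full : Prop :=
  forall b : 'cV[int]_d, exists z : 'cV[int]_n, A *m z = b.

Definition in_NA (b : 'cV[int]_d) : Prop := exists u, nonneg_int u /\ A *m u = b.

Definition IP_feasible (b : 'cV[int]_d) (x : 'cV[int]_n) : Prop :=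
  nonneg_int x /\ A *m x = b.
Definition IP_optimal (b : 'cV[int]_d) (x : 'cV[int]_n) : Prop :=
  IP_feasible b x /\ forall x', IP_feasible b x' -> cdot x <= cdot x'.

Definition in_Delta (s : {set 'I_n}) : Prop :=
  exists y : 'rV[R]_d, forall j,
    (j \in s -> ydot y j = (c j)%:~R) /\ (j \notin s -> ydot y j < (c j)%:~R).

Definition maximal_face (s : {set 'I_n}) : Prop :=
  in_Delta s /\ forall s', in_Delta s' -> s \subset s' -> s' = s.

(* Delta_c is a triangulation: every face spans a simplicial cone, i.e. the
   columns a_j, j in s, are linearly independent. *)
Definition is_triangulation : Prop :=
  forall s, in_Delta s ->
    forall l : 'cV[R]_n, (forall j, j \notin s -> l j 0 = 0) -> AR *m l = 0 -> l = 0.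

Definition generic : Prop :=
  is_triangulation /\
  forall b, in_NA b -> exists x, IP_optimal b x /\ forall x', IP_optimal b x' -> x' = x.

Definition in_Oc (u : 'cV[int]_n) : Prop := nonneg_int u /\ IP_optimal (A *m u) u.

(* Reduced cost for a maximal face s: ctilde_j = c_j - (c_s A_s^{-1}) a_j.
   ys is the row vector c_s A_s^{-1}, characterised as the solution of
   ys . a_j = c_j for j in s (unique since A_s is invertible). *)
Definition solves_cs (s : {set 'I_n}) (ys : 'rV[R]_d) : Prop :=
  forall j, j \in s -> ydot ys j = (c j)%:~R.
Definition ctilde (ys : 'rV[R]_d) (j : 'I_n) : R := (c j)%:~R - ydot ys j.

Definition G_feasible (t : {set 'I_n}) (b : 'cV[int]_d) (x : 'cV[int]_n) : Prop :=
  A *m x = b /\ forall j, j \notin t -> 0 <= x j 0.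
Definition G_obj (ys : 'rV[R]_d) (t : {set 'I_n}) (x : 'cV[int]_n) : R :=
  \sum_(j < n | j \notin t) ctilde ys j * (x j 0)%:~R.
Definition G_optimal ys t b x : Prop :=
  G_feasible t b x /\ forall x', G_feasible t b x' -> G_obj ys t x <= G_obj ys t x'.

Definition G_solves_IP ys t b : Prop :=
  exists x, G_optimal ys t b x /\ nonneg_int x.

Definition in_S (u : 'cV[int]_n) (t : {set 'I_n}) (v : 'cV[int]_n) : Prop :=
  exists k : 'I_n -> nat, v = u + \sum_(i in t) (k i)%:Z *: delta_mx i 0.

End Defs.

From HB Require Import structures.
From mathcomp Require Import all_boot all_order all_algebra.
From mathcomp Require Import Rstruct.
From Stdlib Require Import Rdefinitions.
Import Order.TTheory GRing.Theory Num.Theory.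
Local Open Scope ring_scope.

(* Every v in S(u,tau) is u + w with w >= 0 supported on tau.  Translating by
   such a w changes neither the sign constraints of G^tau (they only concern
   coordinates outside tau) nor its objective (which only reads coordinates
   outside tau), so x |-> x + w maps the optimal solution of G^tau(Au) to that
   of G^tau(Av), and keeps it non-negative. *)

Lemma sum_delta_mx_coord n (t : {set 'I_n}) (k : 'I_n -> nat) j :
  (\sum_(i in t) (k i)%:Z *: delta_mx i 0 : 'cV[int]_n) j 0 =
  if j \in t then (k j)%:Z else 0.
Proof.
rewrite summxE; under eq_bigr => i _ do rewrite !mxE.
case: ifP => jt.
  rewrite (bigD1 j) //= !eqxx mulr1 big1 ?addr0 // => i /andP [_ ij].
  by rewrite eq_sym (negbTE ij) mulr0.
rewrite big1 // => i it; case: eqP => [ji | _]; last by rewrite mulr0.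
by rewrite -ji jt in it.
Qed.

Section GroupRelaxationShift.
Variables (d n : nat) (A : 'M[int]_(d, n)) (c : 'I_n -> int).
Variables (ys : 'rV[R]_d) (t : {set 'I_n}) (w : 'cV[int]_n).
Hypothesis w_supp : forall j, j \notin t -> w j 0 = 0.

Lemma G_objD z : G_obj A c ys t (z + w) = G_obj A c ys t z.
Proof. by apply: eq_bigr => j jt; rewrite mxE w_supp // addr0. Qed.

Lemma G_objB z : G_obj A c ys t (z - w) = G_obj A c ys t z.
Proof. by rewrite -[in RHS](subrK w z) G_objD. Qed.

Lemma G_feasibleD b z :
  G_feasible A t b z -> G_feasible A t (b + A *m w) (z + w).
Proof.
move=> [Az z_ge0]; split; first by rewrite mulmxDr Az.
by move=> j jt; rewrite mxE w_supp // addr0; apply: z_ge0.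
Qed.

Lemma G_feasibleB b z :
  G_feasible A t (b + A *m w) z -> G_feasible A t b (z - w).
Proof.
move=> [Az z_ge0]; split; first by rewrite mulmxBr Az addrK.
by move=> j jt; rewrite !mxE w_supp // subr0; apply: z_ge0.
Qed.

Lemma G_optimalD b x :
  G_optimal A c ys t b x -> G_optimal A c ys t (b + A *m w) (x + w).
Proof.
move=> [x_feas x_opt]; split; first exact: G_feasibleD.
by move=> z /G_feasibleB /x_opt; rewrite G_objB G_objD.
Qed.

Lemma G_solves_IPD b :
  (forall j, 0 <= w j 0) ->
  G_solves_IP A c ys t b -> G_solves_IP A c ys t (b + A *m w).
Proof.
move=> w_ge0 [x [x_opt x_ge0]]; exists (x + w); split.
  exact: G_optimalD.
by move=> j; rewrite mxE addr_ge0.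
Qed.

End GroupRelaxationShift.

Theorem lemma2p10 (d n : nat) (A : 'M[int]_(d, n)) (c : 'I_n -> int)
  (hrank : rank_full A) (hpointed : cone_pointed A) (hker : ker_pos_trivial A)
  (hlat : lattice_full A) (hgen : generic A c)
  (u : 'cV[int]_n) (hu : in_Oc A c u)
  (tau sigma : {set 'I_n}) (htau : in_Delta A c tau)
  (hsigma : maximal_face A c sigma) (hts : tau \subset sigma)
  (ys : 'rV[R]_d) (hys : solves_cs A c sigma ys) :
  G_solves_IP A c ys tau (A *m u) ->
  forall v : 'cV[int]_n, in_S u tau v -> G_solves_IP A c ys tau (A *m v).
Proof.
move=> Gu v [k ->]; rewrite mulmxDr.
apply: G_solves_IPD Gu => j; rewrite sum_delta_mx_coord //.
- by move/negbTE ->.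
- by case: ifP.
Qed.
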